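(* Let $G$ and $H$ be connected graphs of order at least two. Then $O_{\rm SR}(G\,\square\,H)\in\{\mathcal{M},\mathcal{B}\}$. Moreover, $O_{\rm SR}(G\,\square\,H)=\mathcal{M}$ if and only if $G_{\rm SR}\cong aK_2$ and $H_{\rm SR}\cong bK_2$ for some positive integers $a,b$.
   Context: All graphs are finite, simple and undirected; $d(x,y)$ is the shortest-path distance; $aK_2$ is the disjoint union of $a$ copies of $K_2$. The Cartesian product $G\,\square\,H$ has vertex set $V(G)\times V(H)$, with $(u,w)$ adjacent to $(u',w')$ iff either $u=u'$ and $ww'\in E(H)$, or $w=w'$ and $uu'\in E(G)$. A set $S\subseteq V(X)$ is a strong resolving set of a connected graph $X$ if for all distinct $x,y\in V(X)$ there exists $z\in S$ such that $x$ lies on a $y$–$z$ geodesic or $y$ lies on an $x$–$z$ geodesic. A vertex $u$ is maximally distant from $v$ if $d(u,v)\ge d(w,v)$ for every neighbor $w$ of $u$; $u,v$ are mutually maximally distant (MMD) if each is maximally distant from the other. The strong resolving graph $X_{\rm SR}$ has vertex set $\{x: x\text{ is MMD with some }y\}$ and edges exactly the MMD pairs. The Maker–Breaker strong resolving game on $X$: Maker and Breaker alternately select a not-yet-chosen vertex of $X$; Maker wins if the vertices he selects contain a strong resolving set of $X$, Breaker wins otherwise. In the M-game Maker moves first, in the B-game Breaker moves first. $O_{\rm SR}(X)=\mathcal{M}$ if Maker has a winning strategy in both games, $\mathcal{B}$ if Breaker has a winning strategy in both, and $\mathcal{N}$ if the first player has a winning strategy in each. *)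

From mathcomp Require Import all_boot.
Set Implicit Arguments. Unset Strict Implicit. Unset Printing Implicit Defensive.

Section Graphs.
Variable T : finType.
Variable e : rel T.

Definition simple_graph := irreflexive e /\ symmetric e.
Definition connected_graph := forall x y : T, connect e x y.

Fixpoint reach (n : nat) (x : T) : {set T} :=
  match n with
  | 0 => [set x]
  | n'.+1 => reach n' x :|: [set y | [exists z in reach n' x, e z y]]
  end.

(* shortest-path distance (= #|T| if y unreachable from x; irrelevant
   for connected graphs, where d(x,y) <= #|T| - 1) *)
Definition dist (x y : T) : nat := find (fun n => y \in reach n x) (iota 0 #|T|).

Definition on_geodesic (x y z : T) : Prop :=
  exists p : seq T, [/\ path e y p, last y p = z, size p = dist y z & x \in y :: p].

Definition strong_resolving (S : {set T}) : Prop :=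
  forall x y : T, x != y ->
    exists2 z, z \in S & (on_geodesic x y z \/ on_geodesic y x z).

Definition max_distant (u v : T) : bool :=
  [forall w, e u w ==> (dist w v <= dist u v)].
Definition mmd (u v : T) : bool := max_distant u v && max_distant v u.

Definition sr_edge (u v : T) : bool := (u != v) && mmd u v.
Definition sr_vertices : {set T} := [set x | [exists y, sr_edge x y]].
Definition sr_vtype := {x : T | x \in sr_vertices}.

(* Maker--Breaker strong resolving game, played to completion.
   mwin n M B t : Maker (having chosen M) wins from the position where
   Breaker has chosen B, t = (Maker to move). *)
Definition maker_terminal (M : {set T}) : Prop :=
  exists S : {set T}, S \subset M /\ strong_resolving S.

Fixpoint mwin (n : nat) (M B : {set T}) (t : bool) : Prop :=
  match n with
  | 0 => maker_terminal M
  | n'.+1 =>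
    if [set: T] \subset M :|: B then maker_terminal M
    else if t then exists2 v, v \notin M :|: B & mwin n' (v |: M) B false
    else forall v, v \notin M :|: B -> mwin n' M (v |: B) true
  end.

Definition maker_wins_Mgame : Prop := mwin #|T| set0 set0 true.
Definition maker_wins_Bgame : Prop := mwin #|T| set0 set0 false.

End Graphs.

(* aK_2 on vertex set 'I_a * bool *)
Definition aK2_edge (a : nat) : rel ('I_a * bool) :=
  fun x y => (x.1 == y.1) && (x.2 != y.2).

Definition sr_iso_aK2 (T : finType) (e : rel T) (a : nat) : Prop :=
  exists f : sr_vtype e -> ('I_a * bool)%type,
    bijective f /\ forall x y : sr_vtype e, sr_edge e (val x) (val y) = aK2_edge (f x) (f y).

Definition cart_prod (T1 T2 : finType) (g : rel T1) (h : rel T2) : rel (T1 * T2) :=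
  fun x y => ((x.1 == y.1) && h x.2 y.2) || ((x.2 == y.2) && g x.1 y.1).

Inductive outcome := OutM | OutB | OutN.

(* O_SR(X) = o.  Breaker has a winning strategy in a game iff Maker has
   none (finite game of perfect information, determinacy). *)
Definition O_SR_is (T : finType) (e : rel T) (o : outcome) : Prop :=
  match o with
  | OutM => maker_wins_Mgame e /\ maker_wins_Bgame e
  | OutB => ~ maker_wins_Mgame e /\ ~ maker_wins_Bgame e
  | OutN => maker_wins_Mgame e /\ ~ maker_wins_Bgame e
  end.

From mathcomp Require Import all_boot zify.
Set Implicit Arguments. Unset Strict Implicit. Unset Printing Implicit Defensive.

(* Strong resolving sets of a connected graph X are exactly the vertex covers of X_SR:
   no geodesic can be extended beyond an end of an MMD pair, and conversely, for x <> y,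
   going from x through y as far as possible to u, and then from u through x as far as
   possible to v, yields an MMD pair u, v one of whose ends strongly resolves x and y.
   So the game is the Maker-Breaker game of claiming a vertex cover of X_SR.
   Distances in G □ H add up coordinatewise, hence (G □ H)_SR is the direct product of
   G_SR and H_SR.  If G_SR and H_SR are perfect matchings (i.e. copies of aK_2 and bK_2)
   so is the product, and Maker wins both games by answering every Breaker move with
   its partner.  Otherwise one factor contains a cherry l1 - c - l2 and the other an
   edge ab, which give the two vertex-disjoint cherries (l1,b) - (c,a) - (l2,b) and
   (l1,a) - (c,b) - (l2,a) of the product; Breaker claims the centre of one that Maker's
   first move missed, then a leaf Maker did not take, and that edge stays uncovered. *)

Definition covers (T : finType) (r : rel T) (S : {set T}) : Prop :=
  forall u v, r u v -> u \in S \/ v \in S.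

Section Distance.
Variables (T : finType) (e : rel T).
Hypotheses (e_sym : symmetric e) (e_conn : connected_graph e).
Local Notation d := (dist e).

Lemma reachP n x y :
  y \in reach e n x <-> exists p, [/\ path e x p, last x p = y & size p <= n].
Proof.
elim: n y => [|n IH] y /=.
  rewrite in_set1; split=> [/eqP->|]; first by exists [::].
  by case=> -[|z p] [_ /= <-].
rewrite !inE; split.
  case/orP=> [/IH[p [px py pn]]|/existsP[z /andP[/IH[p [px pz pn]] ezy]]].
    by exists p; split=> //; apply: leqW.
  by exists (rcons p y); rewrite rcons_path last_rcons size_rcons px pz ezy.
case=> p [px py pn]; have [pn'|pn'] := leqP (size p) n.
  by apply/orP; left; apply/IH; exists p.
case/lastP: p px py pn pn' => [|q z] //.
rewrite rcons_path last_rcons size_rcons !ltnS => /andP[qx ez] <- qn _.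
apply/orP; right; apply/existsP; exists (last x q); rewrite ez andbT.
by apply/IH; exists q.
Qed.

Lemma reach_connected x y : y \in reach e #|T|.-1 x.
Proof.
have /connectP[p px ->] := e_conn x y.
case/shortenP: px => q qx q_uniq _; apply/reachP; exists q; split=> //.
have := max_card (mem (x :: q)); rewrite (card_uniqP q_uniq) /=.
by case: #|T|.
Qed.

Lemma reach_mono m n x y : m <= n -> y \in reach e m x -> y \in reach e n x.
Proof.
move=> mn /reachP[p [px py pm]]; apply/reachP; exists p; split=> //.
exact: leq_trans mn.
Qed.

Lemma dist_leqE x y n : (d x y <= n) = (y \in reach e n x).
Proof.
rewrite /dist; set P := fun k => y \in reach e k x.
have T_gt0 : 0 < #|T| by apply/card_gt0P; exists x.
have hasP : has P (iota 0 #|T|).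
  apply/hasP; exists #|T|.-1; last exact: reach_connected.
  by rewrite mem_iota add0n prednK // leqnn andbT.
have find_lt : find P (iota 0 #|T|) < #|T| by rewrite -[X in _ < X](size_iota 0) -has_find.
have := nth_find 0 hasP; rewrite nth_iota // add0n => Pfind.
apply/idP/idP => [|yn]; first by move/reach_mono; apply.
rewrite leqNgt; apply/negP => n_lt.
by have := before_find 0 n_lt; rewrite nth_iota ?(ltn_trans n_lt) // add0n /P yn.
Qed.

Lemma dist_le_size x p : path e x p -> d x (last x p) <= size p.
Proof. by move=> px; rewrite dist_leqE; apply/reachP; exists p. Qed.

Lemma shortest_path x y : exists p, [/\ path e x p, last x p = y & size p = d x y].
Proof.
have /reachP[p [px py pd]] : y \in reach e (d x y) x by rewrite -dist_leqE.
by exists p; split=> //; apply/eqP; rewrite eqn_leq pd -{1}py dist_le_size.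
Qed.

Lemma dist_triangle x y z : d x z <= d x y + d y z.
Proof.
have [p [px py <-]] := shortest_path x y.
have [q [qy qz <-]] := shortest_path y z.
have := @dist_le_size x (p ++ q).
by rewrite cat_path px py qy last_cat py qz size_cat; apply.
Qed.

Lemma dist_sym x y : d x y = d y x.
Proof.
wlog suff: x y / d x y <= d y x by move=> le; apply/eqP; rewrite eqn_leq !le.
have [p [py px <-]] := shortest_path y x.
have rev_px : path e x (rev (belast y p)).
  by rewrite -px rev_path (eq_path (e' := e)).
have := dist_le_size rev_px; rewrite size_rev size_belast.
by case: p {py rev_px} px => [|z p] <- /=; rewrite ?rev_cons ?last_rcons.
Qed.

Lemma distxx x : d x x = 0.
Proof. by apply/eqP; rewrite -leqn0 dist_leqE /= in_set1. Qed.

Lemma dist_eq0 x y : (d x y == 0) = (x == y).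
Proof. by rewrite -leqn0 dist_leqE /= in_set1 eq_sym. Qed.

Lemma dist_le1 x y : e x y -> d x y <= 1.
Proof. by move=> exy; have := @dist_le_size x [:: y]; rewrite /= exy; apply. Qed.

Lemma dist_neighbor u w v : e u w -> d w v <= (d u v).+1.
Proof.
move=> euw; apply: leq_trans (dist_triangle w u v) _.
by rewrite dist_sym -add1n leq_add2r dist_le1.
Qed.

Lemma on_geodesicP x y z : on_geodesic e x y z <-> d y x + d x z = d y z.
Proof.
split=> [[p [py pz pd xp]]|dxz].
  case/splitPl: xp py pz pd => p1 p2 p1x; rewrite cat_path last_cat size_cat -p1x.
  case/andP=> p1y p2x p2z pd; apply/eqP; rewrite eqn_leq dist_triangle andbT -pd.
  by rewrite leq_add ?dist_le_size // -p2z dist_le_size.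
have [p [py px pd]] := shortest_path y x.
have [q [qx qz qd]] := shortest_path x z.
exists (p ++ q); rewrite cat_path last_cat size_cat py px qx qz pd qd -dxz.
by split=> //; rewrite -cat_cons mem_cat -px mem_last.
Qed.

Lemma max_distant_on_geodesic u v z :
  max_distant e u v -> on_geodesic e u v z -> z = u.
Proof.
move=> md /on_geodesicP duz; apply/eqP/negPn/negP => zu.
have [[|w p] [up /= pz pd]] := shortest_path u z; first by rewrite pz eqxx in zu.
case/andP: up => euw wp.
have := forallP md w; rewrite euw /= (dist_sym w) (dist_sym u) => dvw.
have dwz : d w z <= size p by rewrite -pz dist_le_size.
have := dist_triangle v w z; lia.
Qed.

Lemma farthest_max_distant a b u :
  d a b + d b u = d a u ->
  (forall w, d a b + d b w == d a w -> d a w <= d a u) ->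
  max_distant e u a.
Proof.
move=> abu u_max; apply/forallP => w; apply/implyP => euw.
rewrite (dist_sym w a) (dist_sym u a) leqNgt; apply/negP => uw.
have := dist_neighbor a euw; have := dist_neighbor b euw.
rewrite (dist_sym w a) (dist_sym u a) (dist_sym w b) (dist_sym u b) => buw auw.
have /u_max : d a b + d b w == d a w.
  by rewrite eqn_leq dist_triangle andbT; lia.
lia.
Qed.

Lemma sr_edge_between x y : x != y ->
  exists u v, [/\ sr_edge e u v, on_geodesic e y x u & on_geodesic e x y v].
Proof.
move=> xy.
case: (@arg_maxnP _ y (fun w => d x y + d y w == d x w) (d x));
  first by rewrite distxx addn0.
move=> u /eqP xyu u_max.
case: (@arg_maxnP _ x (fun w => d u x + d x w == d u w) (d u));
  first by rewrite distxx addn0.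
move=> v /eqP uxv v_max.
have mux := farthest_max_distant xyu u_max.
have mvu := farthest_max_distant uxv v_max.
have muv : max_distant e u v.
  apply/forallP => w; apply/implyP => euw.
  have := implyP (forallP mux w) euw; have := dist_triangle w x v; lia.
have dxy : 0 < d x y by rewrite lt0n dist_eq0.
have uv : u != v.
  by apply/eqP => uv; move: uxv; rewrite -uv distxx (dist_sym u); lia.
exists u, v; split; rewrite ?on_geodesicP //; first by rewrite /sr_edge uv /mmd muv.
have := dist_triangle u y v; have := dist_triangle y x v.
rewrite (dist_sym u x) in uxv; rewrite (dist_sym u y) (dist_sym y x); lia.
Qed.

Lemma strong_resolvingP S : strong_resolving e S <-> covers (sr_edge e) S.
Proof.
split=> [resS u v /andP[uv /andP[muv mvu]]|coverS x y].
  have [z zS [/(max_distant_on_geodesic muv)|/(max_distant_on_geodesic mvu)] <-] :=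
    resS u v uv; by [left|right].
case/sr_edge_between=> u [v [uv yxu xyv]].
by case: (coverS u v uv) => [uS|vS]; [exists u => //; right|exists v => //; left].
Qed.

Lemma maker_terminalP M : maker_terminal e M <-> covers (sr_edge e) M.
Proof.
split=> [[S [SM /strong_resolvingP coverS]] u v /coverS[]|/strong_resolvingP resM].
- by left; apply: (subsetP SM).
- by right; apply: (subsetP SM).
by exists M.
Qed.

End Distance.

Lemma sr_edge_sym (T : finType) (e : rel T) : symmetric (sr_edge e).
Proof. by move=> u v; rewrite /sr_edge /mmd eq_sym [max_distant e u v && _]andbC. Qed.

Lemma sr_edge_irr (T : finType) (e : rel T) : irreflexive (sr_edge e).
Proof. by move=> u; rewrite /sr_edge eqxx. Qed.

Section SimpleGraph.
Variables (T : finType) (e : rel T).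
Hypotheses (e_simple : simple_graph e) (e_conn : connected_graph e) (T_gt1 : 1 < #|T|).

Lemma exists_neighbor x : exists y, e x y.
Proof.
have [y yx] : exists y, y != x.
  have /card_gt1P[a [b [_ _ ab]]] := T_gt1.
  by case: (eqVneq a x) => [<-|ax]; [exists b; rewrite eq_sym | exists a].
have /connectP[[|z p] /=] := e_conn x y; first by move=> _ yx'; rewrite yx' eqxx in yx.
by case/andP=> exz _ _; exists z.
Qed.

Lemma max_distantxx x : ~~ max_distant e x x.
Proof.
have [y exy] := exists_neighbor x.
apply/forallP => /(_ y); rewrite exy distxx // leqn0 dist_eq0 // => /eqP yx.
by case: e_simple => e_irr _; rewrite yx e_irr in exy.
Qed.

Lemma sr_edgeE u v : sr_edge e u v = mmd e u v.
Proof.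
rewrite /sr_edge; case: eqVneq => [->|//].
by rewrite /mmd (negbTE (max_distantxx v)).
Qed.

Lemma sr_edge_exists : exists u v, sr_edge e u v.
Proof.
have /card_gt1P[a [b [_ _ ab]]] := T_gt1.
case: (@arg_maxnP _ (a, b) xpredT (fun p => dist e p.1 p.2) isT) => -[u v] _ uv_max.
exists u, v; rewrite sr_edgeE; apply/andP; split; apply/forallP => w; apply/implyP => _.
  exact: (uv_max (w, v)).
case: e_simple => _ e_sym.
by rewrite (dist_sym e_sym e_conn w) (dist_sym e_sym e_conn v); exact: (uv_max (u, w)).
Qed.

End SimpleGraph.

Section Matchings.
Variables (T : finType) (r : rel T).

Definition matching := [forall u, forall v, forall w, r u v ==> r u w ==> (v == w)].

Definition cherry (c l1 l2 : T) := [&& r c l1, r c l2 & l1 != l2].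

Definition cherry_avoids (x : T) :=
  exists c l1 l2, cherry c l1 l2 && (x \notin [:: c; l1; l2]).

Lemma matchingP : reflect (forall u v w, r u v -> r u w -> v = w) matching.
Proof.
apply: (iffP forallP) => [m u v w uv uw|m u].
  by apply/eqP; move: (forallP (forallP (m u) v) w); rewrite uv uw.
apply/forallP => v; apply/forallP => w; apply/implyP => uv; apply/implyP => uw.
by apply/eqP; apply: m uv uw.
Qed.

Lemma cherry_of_not_matching : ~~ matching -> exists c l1 l2, cherry c l1 l2.
Proof.
case/forallPn=> c /forallPn[l1 /forallPn[l2]].
by rewrite !negb_imply => /and3P[cl1 cl2 l12]; exists c, l1, l2; apply/and3P.
Qed.

End Matchings.

Section CoverGame.
Variables (T : finType) (e r : rel T).
Hypotheses (r_sym : symmetric r) (r_irr : irreflexive r).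
Hypothesis terminalP : forall M, maker_terminal e M <-> covers r M.

Lemma not_terminal (M : {set T}) u v :
  r u v -> u \notin M -> v \notin M -> ~ maker_terminal e M.
Proof. by move=> uv uM vM /terminalP /(_ u v uv); rewrite (negbTE uM) (negbTE vM); case. Qed.

Lemma mwinS n (M B : {set T}) t : ~ maker_terminal e M -> mwin e n.+1 M B t ->
  ~~ ([set: T] \subset M :|: B) /\
  if t then exists2 x, x \notin M :|: B & mwin e n (x |: M) B false
  else forall x, x \notin M :|: B -> mwin e n M (x |: B) true.
Proof. by move=> notM /=; case: ifP => [_ /notM|]. Qed.

Lemma breaker_keeps_edge u v n (M B : {set T}) t : r u v ->
  u \in B -> v \in B -> u \notin M -> v \notin M -> ~ mwin e n M B t.
Proof.
move=> uv; elim: n M B t => [|n IH] M B t uB vB uM vM W.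
  exact: not_terminal uv uM vM W.
have [notfull] := mwinS (not_terminal uv uM vM) W; case: t {W}.
  case=> x; rewrite inE negb_or => /andP[_ xB]; apply: IH => //;
    by rewrite !inE negb_or ?uM ?vM andbT; apply: contraNneq _ xB => <-.
have [x _ xfree] := subsetPn notfull.
by move/(_ x xfree); apply: IH; rewrite // !inE ?uB ?vB orbT.
Qed.

Lemma breaker_wins_cherry c l1 l2 n (M B : {set T}) : cherry r c l1 l2 ->
  [/\ c \notin M :|: B, l1 \notin M :|: B & l2 \notin M :|: B] -> ~ mwin e n M B false.
Proof.
case/and3P=> cl1 cl2 l12 [cf l1f l2f].
have notM : ~ maker_terminal e M.
  move: cf l1f; rewrite !inE !negb_or => /andP[cM _] /andP[l1M _].
  exact: not_terminal cl1 cM l1M.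
case: n => [|n] W; first exact: notM W.
have [_ /(_ c cf)] := mwinS notM W.
case: n {W} => [|n] W; first exact: notM W.
have [_ [x]] := mwinS notM W; rewrite !inE !negb_or => /and3P[xM xc xB] {}W.
have [l [cl lx lM lB]] : exists l, [/\ r c l, l != x, l \notin M & l \notin B].
  move: l1f l2f; rewrite !inE !negb_or => /andP[l1M l1B] /andP[l2M l2B].
  by case: (eqVneq l1 x) => [l1x|]; [exists l2; rewrite -l1x eq_sym | exists l1].
have lc : l != c by apply: contraTneq cl => ->; rewrite r_irr.
have cxM : c \notin x |: M.
  by move: cf; rewrite !inE !negb_or eq_sym xc => /andP[].
have lxM : l \notin x |: M by rewrite !inE negb_or lx.
have notxM := not_terminal cl cxM lxM.
case: n W => [|n] W; first exact: notxM W.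
have [_ /(_ l)] := mwinS notxM W.
rewrite !inE !negb_or lx lM lc lB => /(_ isT).
by apply: (breaker_keeps_edge cl); rewrite // !inE eqxx ?orbT.
Qed.

Lemma breaker_wins_Bgame c l1 l2 : cherry r c l1 l2 -> ~ maker_wins_Bgame e.
Proof. by move=> chl; apply: breaker_wins_cherry chl _; rewrite !inE. Qed.

Lemma breaker_wins_Mgame : 0 < #|T| -> (forall x, cherry_avoids r x) -> ~ maker_wins_Mgame e.
Proof.
case/card_gt0P=> x0 _ avoid.
have not0 : ~ maker_terminal e set0.
  have [c [l1 [l2 /andP[/and3P[cl1 _ _] _]]]] := avoid x0.
  by apply: not_terminal cl1 _ _; rewrite inE.
rewrite /maker_wins_Mgame; case: #|T| => [|n] W; first exact: not0 W.
have [_ [x _]] := mwinS not0 W; rewrite setU0.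
have [c [l1 [l2 /andP[chl]]]] := avoid x.
rewrite !inE !negb_or => /and3P[xc xl1 xl2].
by apply: breaker_wins_cherry chl _; rewrite !inE !orbF ![_ == x]eq_sym.
Qed.

Definition safe (M B : {set T}) := forall u v, r u v ->
  [|| u \in M, v \in M | (u \notin M :|: B) && (v \notin M :|: B)].

Lemma safe_cover (M B : {set T}) : safe M B ->
  (forall u w, u \notin M :|: B -> w \notin M :|: B -> u = w) -> maker_terminal e M.
Proof.
move=> safeMB one_free; apply/terminalP => u w uw.
case/or3P: (safeMB u w uw) => [uM|wM|/andP[uf wf]]; [by left|by right|].
by move: uw; rewrite (one_free u w uf wf) r_irr.
Qed.

Lemma safe_maker_move (M B : {set T}) x : safe M B -> safe (x |: M) B.
Proof.
move=> safeMB u v uv; case/or3P: (safeMB u v uv) => [uM|vM|]; rewrite !inE ?uM ?vM ?orbT //.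
rewrite !negb_or => /andP[/andP[/negbTE-> /negbTE->] /andP[/negbTE-> /negbTE->]].
by case: (u == x); case: (v == x).
Qed.

Lemma safe_breaker_move (M B : {set T}) v y : safe M B ->
  (forall w, r v w -> w \notin M :|: B -> w = y) -> safe (y |: M) (v |: B).
Proof.
move=> safeMB v_partner u w uw.
case/or3P: (safeMB u w uw) => [uM|wM|/andP[uf wf]]; rewrite !inE ?uM ?wM ?orbT //.
have [uv|uv] := eqVneq u v; first by rewrite (v_partner w) ?eqxx ?orbT // -uv.
have [wv|wv] := eqVneq w v; first by rewrite (v_partner u) ?eqxx // -wv r_sym.
move: uf wf; rewrite !inE !negb_or => /andP[/negbTE-> /negbTE->] /andP[/negbTE-> /negbTE->].
by case: (u == y); case: (w == y).
Qed.

Hypothesis r_matching : matching r.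

Lemma maker_wins_safe n (M B : {set T}) : safe M B -> #|T| <= n + #|M :|: B| ->
  mwin e n M B true /\ mwin e n M B false.
Proof.
elim/ltn_ind: n M B => n IH M B safeMB count.
have at_most_one_free v : [set: T] \subset v |: (M :|: B) ->
    forall u w, u \notin M :|: B -> w \notin M :|: B -> u = w.
  move=> /subsetP full u w uf wf.
  move: (full u (in_setT u)) (full w (in_setT w)).
  by rewrite !in_setU1 (negbTE uf) (negbTE wf) !orbF => /eqP-> /eqP->.
have full_won : [set: T] \subset M :|: B -> maker_terminal e M.
  by move=> /subsetP full; apply: safe_cover safeMB _ => u w; rewrite full.
case: n IH count => [|n] IH count.
  suff W : maker_terminal e M by split.
  by apply: full_won; rewrite subTset eqEcard subsetT cardsT.
rewrite /=; case: ifP => [/full_won W|/subsetPn[x _ xf]]; first by split.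
split.
  exists x => //; apply: (proj2 (IH n (ltnSn n) _ _ (safe_maker_move x safeMB) _)).
  by rewrite -setUA cardsU1 xf; lia.
move=> v vf; case: n IH count => [|n] IH count /=.
  apply: safe_cover safeMB (at_most_one_free v _).
  by rewrite subTset eqEcard subsetT cardsT cardsU1 vf; lia.
rewrite setUCA; case: ifP => [/at_most_one_free/(safe_cover safeMB)//|/subsetPn[z _ zf]].
have [y [yf v_partner]] : exists y,
    y \notin v |: (M :|: B) /\ forall w, r v w -> w \notin M :|: B -> w = y.
  case: (pickP (fun w => r v w && (w \notin M :|: B))) => [w /andP[vw wf]|no_partner].
    exists w; split=> [|w' vw' _]; last exact: (matchingP _ r_matching v).
    by rewrite in_setU1 negb_or wf andbT; apply: contraTneq vw => ->; rewrite r_irr.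
  by exists z; split=> // w vw wf; move: (no_partner w); rewrite /= vw wf.
exists y => //.
apply: (proj2 (IH n (leqnSn _) _ _ (safe_breaker_move safeMB v_partner) _)).
by rewrite -setUA (setUCA M) cardsU1 yf cardsU1 vf; lia.
Qed.

Lemma maker_wins : maker_wins_Mgame e /\ maker_wins_Bgame e.
Proof. by apply: maker_wins_safe; [move=> u v _; rewrite !inE | rewrite leq_addr]. Qed.

End CoverGame.

Lemma sr_edge_vertex (T : finType) (e : rel T) u v : sr_edge e u v -> u \in sr_vertices e.
Proof. by move=> uv; rewrite inE; apply/existsP; exists v. Qed.

Lemma aK2_matching a : matching (@aK2_edge a).
Proof.
apply/matchingP => -[i b] [j c] [k d]; rewrite /aK2_edge /=.
by case/andP=> /eqP<- bc /andP[/eqP<- bd]; congr pair; move: bc bd; case: b; case: c; case: d.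
Qed.

Lemma sr_iso_aK2_matching (T : finType) (e : rel T) a :
  sr_iso_aK2 e a -> matching (sr_edge e).
Proof.
case=> f [[f' fK _] f_edge]; apply/matchingP => u v w uv uw.
have uP := sr_edge_vertex uv.
have vP : v \in sr_vertices e by apply: (sr_edge_vertex (v := u)); rewrite sr_edge_sym.
have wP : w \in sr_vertices e by apply: (sr_edge_vertex (v := u)); rewrite sr_edge_sym.
have := matchingP _ (aK2_matching a) (f (exist _ u uP)) (f (exist _ v vP)) (f (exist _ w wP)).
by rewrite -!f_edge /= => /(_ uv uw) /(can_inj fK) [].
Qed.

Section SRMatching.
Variables (T : finType) (e : rel T).
Hypothesis sr_matching : matching (sr_edge e).
Local Notation P := (sr_vertices e).

Definition partner x := odflt x [pick y | sr_edge e x y].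

Lemma partner_edge x : x \in P -> sr_edge e x (partner x).
Proof.
rewrite inE => /existsP[y xy]; rewrite /partner.
by case: pickP => [//|/(_ y)]; rewrite xy.
Qed.

Lemma partner_eq x y : sr_edge e x y -> partner x = y.
Proof.
move=> xy; have xP := sr_edge_vertex xy.
exact: (matchingP _ sr_matching x _ _ (partner_edge xP) xy).
Qed.

Lemma partner_vertex x : x \in P -> partner x \in P.
Proof. by move/partner_edge; rewrite sr_edge_sym => /sr_edge_vertex. Qed.

Lemma partner_neq x : x \in P -> partner x != x.
Proof. by move/partner_edge; apply: contraTneq => ->; rewrite sr_edge_irr. Qed.

Lemma partnerK : {in P, involutive partner}.
Proof. by move=> x /partner_edge; rewrite sr_edge_sym => /partner_eq. Qed.

Definition lower := [set x in P | enum_rank x < enum_rank (partner x)].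

Lemma lower_partner x : x \in P -> (partner x \in lower) = (x \notin lower).
Proof.
move=> xP; rewrite ![_ \in lower]inE partnerK // partner_vertex // xP /= -leqNgt ltn_neqAle.
by rewrite val_eqE (inj_eq enum_rank_inj) partner_neq.
Qed.

Lemma lower_vertex x : x \in lower -> x \in P.
Proof. by rewrite [_ \in lower]inE => /andP[]. Qed.

Definition low x := if x \in lower then x else partner x.

Lemma low_lower x : x \in P -> low x \in lower.
Proof. by move=> xP; rewrite /low; case: ifPn; rewrite // -lower_partner. Qed.

Lemma low_partner x : x \in P -> low (partner x) = low x.
Proof. by move=> xP; rewrite /low lower_partner //; case: (x \in lower); rewrite /= ?partnerK. Qed.

Lemma sr_edge_low x y : x \in P -> y \in P ->
  sr_edge e x y = (low x == low y) && ((x \in lower) != (y \in lower)).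
Proof.
move=> xP yP; apply/idP/idP => [/partner_eq <-|].
  by rewrite low_partner // eqxx lower_partner //; case: (x \in lower).
rewrite /low; case: (x \in lower); case: (y \in lower); rewrite ?andbF ?andbT // => /eqP xy.
  by rewrite xy sr_edge_sym partner_edge.
by rewrite -xy partner_edge.
Qed.

Lemma matching_sr_iso_aK2 x0 : x0 \in P -> exists2 a, 0 < a & sr_iso_aK2 e a.
Proof.
move=> x0P; have l0 := low_lower x0P.
exists #|lower|; first by apply/card_gt0P; exists (low x0).
have vertexP (i : 'I_#|lower|) (b : bool) :
    (if b then partner (enum_val i) else enum_val i) \in P.
  by have iP := lower_vertex (enum_valP i); case: b; rewrite ?partner_vertex.
pose f (x : sr_vtype e) := (enum_rank_in l0 (low (val x)), val x \notin lower).
pose g (p : 'I_#|lower| * bool) : sr_vtype e := exist (fun x => x \in P) _ (vertexP p.1 p.2).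
exists f; split.
  exists g => [[x xP]|[i b]]; first apply: val_inj; rewrite /= ?enum_rankK_in ?low_lower //.
    by rewrite /low; case: (x \in lower); rewrite /= ?partnerK.
  have iL := enum_valP i; have iP := lower_vertex iL.
  rewrite /f /=; case: b; rewrite ?low_partner // /low ?lower_partner // iL ?enum_valK_in //.
move=> [x xP] [y yP]; rewrite sr_edge_low // /aK2_edge /=; congr andb.
  apply/eqP/eqP => [->|E] //.
  by rewrite -(enum_rankK_in l0 (low_lower xP)) E enum_rankK_in // low_lower.
by case: (x \in lower); case: (y \in lower).
Qed.

End SRMatching.

Lemma cherry_avoids_inj (T T' : finType) (r : rel T) (r' : rel T') (f : T -> T') :
  injective f -> (forall u v, r' (f u) (f v) = r u v) ->
  forall x, cherry_avoids r x -> cherry_avoids r' (f x).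
Proof.
move=> f_inj f_rel x [c [l1 [l2 /andP[chl xnot]]]]; exists (f c), (f l1), (f l2).
by move: xnot; rewrite /cherry !f_rel !inE !(inj_eq f_inj) => ->; rewrite andbT.
Qed.

Definition direct_prod (T1 T2 : finType) (r1 : rel T1) (r2 : rel T2) : rel (T1 * T2) :=
  fun u v => r1 u.1 v.1 && r2 u.2 v.2.

Section DirectProduct.
Variables (T1 T2 : finType) (r1 : rel T1) (r2 : rel T2).
Local Notation r := (direct_prod r1 r2).

Lemma direct_prod_sym : symmetric r1 -> symmetric r2 -> symmetric r.
Proof. by move=> r1_sym r2_sym u v; rewrite /direct_prod r1_sym r2_sym. Qed.

Lemma direct_prod_irr : irreflexive r1 -> irreflexive r.
Proof. by move=> r1_irr u; rewrite /direct_prod r1_irr. Qed.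

Lemma matching_direct_prod : matching r1 -> matching r2 -> matching r.
Proof.
move=> /matchingP m1 /matchingP m2; apply/matchingP => u [v1 v2] [w1 w2].
by case/andP=> /= uv1 uv2 /andP[/= uw1 uw2]; rewrite (m1 _ _ _ uv1 uw1) (m2 _ _ _ uv2 uw2).
Qed.

Lemma direct_prod_cherry_avoids c l1 l2 a b :
  irreflexive r1 -> symmetric r2 -> irreflexive r2 ->
  cherry r1 c l1 l2 -> r2 a b -> forall x, cherry_avoids r x.
Proof.
move=> r1_irr r2_sym r2_irr /and3P[cl1 cl2 l12] ab x.
have cl1' : c != l1 by apply: contraTneq cl1 => ->; rewrite r1_irr.
have cl2' : c != l2 by apply: contraTneq cl2 => ->; rewrite r1_irr.
have ab' : a != b by apply: contraTneq ab => ->; rewrite r2_irr.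
have [xC1|xC2] :
    x \notin [:: (c, a); (l1, b); (l2, b)] \/ x \notin [:: (c, b); (l1, a); (l2, a)].
  case: x => x1 x2; rewrite !inE !xpair_eqE.
  have [->|_] := eqVneq x1 c; rewrite ?(negbTE cl1') ?(negbTE cl2') /= ?orbF.
    by have [->|] := eqVneq x2 a; [right | left].
  have [->|_] := eqVneq x2 a; last by right; rewrite !andbF.
  by left; rewrite eq_sym (negbTE ab') !andbF.
- exists (c, a), (l1, b), (l2, b).
  by rewrite xC1 /cherry /direct_prod /= cl1 cl2 ab xpair_eqE negb_and l12.
- exists (c, b), (l1, a), (l2, a).
  by rewrite xC2 /cherry /direct_prod /= cl1 cl2 r2_sym ab xpair_eqE negb_and l12.
Qed.

End DirectProduct.

Lemma cherry_avoids_direct_prod (T1 T2 : finType) (r1 : rel T1) (r2 : rel T2) :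
  symmetric r1 -> irreflexive r1 -> symmetric r2 -> irreflexive r2 ->
  (exists a b, r1 a b) -> (exists a b, r2 a b) -> ~~ (matching r1 && matching r2) ->
  forall x, cherry_avoids (direct_prod r1 r2) x.
Proof.
move=> r1_sym r1_irr r2_sym r2_irr [a1 [b1 ab1]] [a2 [b2 ab2]].
rewrite negb_and => /orP[]/cherry_of_not_matching[c [l1 [l2 chl]]] [x1 x2].
  exact: direct_prod_cherry_avoids chl ab2 _.
pose swap (u : T2 * T1) := (u.2, u.1).
have swap_inj : injective swap by move=> [? ?] [? ?] [-> ->].
have avoid : cherry_avoids (direct_prod r2 r1) (x2, x1).
  exact: direct_prod_cherry_avoids chl ab1 _.
by apply: (cherry_avoids_inj swap_inj _ avoid) => u v; rewrite /direct_prod andbC.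
Qed.

Section CartesianProduct.
Variables (T1 T2 : finType) (g : rel T1) (h : rel T2).
Hypotheses (g_simple : simple_graph g) (h_simple : simple_graph h).
Hypotheses (g_conn : connected_graph g) (h_conn : connected_graph h).
Local Notation X := (cart_prod g h).

Lemma cart_prod_simple : simple_graph X.
Proof.
case: g_simple h_simple => [g_irr g_sym] [h_irr h_sym]; split=> [u|u v].
  by rewrite /cart_prod g_irr h_irr !andbF.
by rewrite /cart_prod g_sym h_sym (eq_sym u.1) (eq_sym u.2).
Qed.

Lemma path_cart_fst b a p : path g a p -> path X (a, b) [seq (x, b) | x <- p].
Proof.
by elim: p a => //= x p IH a /andP[ax /IH->]; rewrite /cart_prod /= eqxx ax orbT.
Qed.

Lemma path_cart_snd a b q : path h b q -> path X (a, b) [seq (a, y) | y <- q].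
Proof. by elim: q b => //= y q IH b /andP[hb /IH->]; rewrite /cart_prod /= eqxx hb. Qed.

Lemma cart_prod_path u v : exists p,
  [/\ path X u p, last u p = v & size p = dist g u.1 v.1 + dist h u.2 v.2].
Proof.
case: u v => [u1 u2] [v1 v2] /=.
have [p [pu pv <-]] := shortest_path g_conn u1 v1.
have [q [qu qv <-]] := shortest_path h_conn u2 v2.
exists ([seq (x, u2) | x <- p] ++ [seq (v1, y) | y <- q]).
rewrite cat_path last_cat (last_map (fun x => (x, u2)) p u1) pv.
rewrite (last_map (fun y => (v1, y)) q u2) qv size_cat !size_map.
by rewrite path_cart_fst // path_cart_snd.
Qed.

Lemma cart_prod_connected : connected_graph X.
Proof. by move=> u v; have [p [up <- _]] := cart_prod_path u v; apply/connectP; exists p. Qed.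

Lemma dist_cart_le_size a p : path X a p ->
  dist g a.1 (last a p).1 + dist h a.2 (last a p).2 <= size p.
Proof.
elim: p a => [|b p IH] a /=; first by rewrite !distxx.
case/andP=> ab /IH; set z := last b p => bz.
have := dist_triangle g_conn a.1 b.1 z.1; have := dist_triangle h_conn a.2 b.2 z.2.
by case/orP: ab => /andP[/eqP-> ab];
  [have := dist_le1 h_conn ab | have := dist_le1 g_conn ab]; lia.
Qed.

Lemma dist_cart_prod u v : dist X u v = dist g u.1 v.1 + dist h u.2 v.2.
Proof.
apply/eqP; rewrite eqn_leq; apply/andP; split.
  have [p [up <- <-]] := cart_prod_path u v.
  exact: dist_le_size cart_prod_connected _ _ up.
by have [p [up <- <-]] := shortest_path cart_prod_connected u v; apply: dist_cart_le_size.
Qed.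

Lemma max_distant_cart_prod u v :
  max_distant X u v = max_distant g u.1 v.1 && max_distant h u.2 v.2.
Proof.
case: u v => [u1 u2] [v1 v2]; apply/forallP/andP => /= [md|[/forallP md1 /forallP md2]].
  split; apply/forallP => w; apply/implyP => uw.
    have := implyP (md (w, u2)); rewrite /cart_prod /= eqxx uw orbT !dist_cart_prod.
    by rewrite leq_add2r; apply.
  have := implyP (md (u1, w)); rewrite /cart_prod /= eqxx uw !dist_cart_prod.
  by rewrite leq_add2l; apply.
move=> [w1 w2]; apply/implyP; rewrite /cart_prod !dist_cart_prod /=.
case/orP=> /andP[/eqP<- uw].
  by rewrite leq_add2l; apply: (implyP (md2 w2)).
by rewrite leq_add2r; apply: (implyP (md1 w1)).
Qed.

Hypotheses (T1_gt1 : 1 < #|T1|) (T2_gt1 : 1 < #|T2|).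

Lemma sr_edge_cart_prod u v :
  sr_edge X u v = direct_prod (sr_edge g) (sr_edge h) u v.
Proof.
have X_gt1 : 1 < #|{: T1 * T2}|.
  by rewrite card_prod (leq_trans T1_gt1) // leq_pmulr // ltnW.
rewrite /direct_prod (sr_edgeE cart_prod_simple cart_prod_connected X_gt1).
by rewrite (sr_edgeE g_simple) // (sr_edgeE h_simple) // /mmd !max_distant_cart_prod andbACA.
Qed.

Lemma cart_prod_outcome :
  O_SR_is X (if matching (sr_edge g) && matching (sr_edge h) then OutM else OutB).
Proof.
pose r := direct_prod (sr_edge g) (sr_edge h).
have r_sym : symmetric r := direct_prod_sym (@sr_edge_sym _ g) (@sr_edge_sym _ h).
have r_irr : irreflexive r := direct_prod_irr _ (@sr_edge_irr _ g).
have terminalP M : maker_terminal X M <-> covers r M.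
  case: cart_prod_simple => _ X_sym; rewrite (maker_terminalP X_sym cart_prod_connected).
  split=> cov u v uv; apply: cov; first by rewrite sr_edge_cart_prod.
  by rewrite sr_edge_cart_prod in uv.
case: ifP => [/andP[mg mh]|/negbT not_matching].
  exact: maker_wins r_sym r_irr terminalP (matching_direct_prod mg mh).
have g_edge := sr_edge_exists g_simple g_conn T1_gt1.
have h_edge := sr_edge_exists h_simple h_conn T2_gt1.
have avoid := cherry_avoids_direct_prod (@sr_edge_sym _ g) (@sr_edge_irr _ g)
  (@sr_edge_sym _ h) (@sr_edge_irr _ h) g_edge h_edge not_matching.
have [[a1 _] [a2 _]] := (g_edge, h_edge).
have [c [l1 [l2 /andP[chl _]]]] := avoid (a1, a2).
split.
  by apply: breaker_wins_Mgame r_irr terminalP _ avoid; apply/card_gt0P; exists (a1, a2).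
exact: (breaker_wins_Bgame (r := r) r_irr terminalP chl).
Qed.

End CartesianProduct.

Theorem mainTheorem14 (T1 T2 : finType) (g : rel T1) (h : rel T2) :
  simple_graph g -> simple_graph h ->
  connected_graph g -> connected_graph h ->
  1 < #|T1| -> 1 < #|T2| ->
  (O_SR_is (cart_prod g h) OutM \/ O_SR_is (cart_prod g h) OutB) /\
  (O_SR_is (cart_prod g h) OutM <->
     exists a b : nat, [/\ 0 < a, 0 < b, sr_iso_aK2 g a & sr_iso_aK2 h b]).
Proof.
move=> g_simple h_simple g_conn h_conn T1_gt1 T2_gt1.
have := cart_prod_outcome g_simple h_simple g_conn h_conn T1_gt1 T2_gt1.
case: ifP => [/andP[g_matching h_matching]|not_matching] outcome.
  have [u [v /sr_edge_vertex uP]] := sr_edge_exists g_simple g_conn T1_gt1.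
  have [u' [v' /sr_edge_vertex u'P]] := sr_edge_exists h_simple h_conn T2_gt1.
  have [a a_gt0 g_iso] := matching_sr_iso_aK2 g_matching uP.
  have [b b_gt0 h_iso] := matching_sr_iso_aK2 h_matching u'P.
  by split; [left | split=> // _; exists a, b].
split; [right | split] => //; first by case: outcome => notM _ [/notM].
case=> a [b [_ _ /sr_iso_aK2_matching g_matching /sr_iso_aK2_matching h_matching]].
by rewrite g_matching h_matching in not_matching.
Qed.
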